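(* Let $K$ be a field, $s\ge2$, $S=K[t_1,\ldots,t_s]$ with each $t_i$ of degree $1$, and let $\mathcal{L}\subset\mathbb{Z}^s$ be a homogeneous lattice of rank $s-1$ generated as a $\mathbb{Z}$-module by the rows of an integral matrix $A$. Then $\deg S/I(\mathcal{L})=d_1\cdots d_{s-1}$, where $d_1,\ldots,d_{s-1}$ are the invariant factors of $A$.
   Context: A lattice is a subgroup of $\mathbb{Z}^s$; it is homogeneous if $\sum_ia_i=0$ for all $a\in\mathcal{L}$. For $a\in\mathbb{Z}^s$ write $a=a^+-a^-$ with $a^+,a^-\in\mathbb{N}^s$ of disjoint supports; $I(\mathcal{L})=(\{t^{a^+}-t^{a^-}:a\in\mathcal{L}\})$. The invariant factors of $A$ are the positive diagonal entries $d_1\mid d_2\mid\cdots$ of its Smith normal form. For a graded ideal $I$, with Hilbert function $H_I(d)=\dim_K S_d/I_d$ and Hilbert polynomial $h_I(t)=c_kt^k+\cdots$ (agreeing with $H_I(d)$ for $d\gg0$; $k=-1$ meaning $h_I=0$), $\deg S/I=c_k\,k!$ if $k\ge0$ and $\dim_K S/I$ if $k=-1$. *)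

From HB Require Import structures.
From mathcomp Require Import all_boot all_order all_algebra.
From mathcomp.multinomials Require Import mpoly.
Set Implicit Arguments. Unset Strict Implicit. Unset Printing Implicit Defensive.
Import Order.TTheory GRing.Theory Num.Theory.
Local Open Scope ring_scope.

Definition in_lattice (m s : nat) (A : 'M[int]_(m, s)) (a : 'rV[int]_s) : Prop :=
  exists u : 'rV[int]_m, a = u *m A.

(* a^+ and a^- as exponent vectors (disjoint supports, a = a^+ - a^-). *)
Definition posm (s : nat) (a : 'rV[int]_s) : 'X_{1..s} :=
  [multinom absz (Num.max (a ord0 i) 0) | i < s].
Definition negm (s : nat) (a : 'rV[int]_s) : 'X_{1..s} := posm (- a).

Definition lbinom (K : fieldType) (s : nat) (a : 'rV[int]_s) : {mpoly K[s]} :=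
  'X_[posm a] - 'X_[negm a].

Definition in_lattice_ideal (K : fieldType) (m s : nat) (A : 'M[int]_(m, s))
    (p : {mpoly K[s]}) : Prop :=
  exists r : seq ({mpoly K[s]} * 'rV[int]_s),
    (forall x, x \in r -> in_lattice A x.2) /\
    p = \sum_(x <- r) x.1 * lbinom K x.2.

Arguments in_lattice_ideal K {m s} A p.

Definition homog_deg (K : fieldType) (s d : nat) (p : {mpoly K[s]}) : bool :=
  all [pred mm | mdeg mm == d] (msupp p).

Definition indep_mod (K : fieldType) (s : nat) (I : {mpoly K[s]} -> Prop)
    (d n : nat) (ps : n.-tuple {mpoly K[s]}) : Prop :=
  (forall i, homog_deg d (tnth ps i)) /\
  forall c : 'I_n -> K, I (\sum_(i < n) c i *: tnth ps i) -> forall i, c i = 0.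

(* H_I(d) = dim_K S_d / I_d = n *)
Definition hilb_fun_is (K : fieldType) (s : nat) (I : {mpoly K[s]} -> Prop)
    (d n : nat) : Prop :=
  (exists ps : n.-tuple {mpoly K[s]}, indep_mod I d ps) /\
  ~ (exists ps : n.+1.-tuple {mpoly K[s]}, indep_mod I d ps).

(* deg S/I = e : with h_I the Hilbert polynomial (H_I(d) = h_I(d) for d >= N),
   e = c_k k! if h_I <> 0 has degree k and leading coefficient c_k,
   and e = dim_K S/I = sum_d H_I(d) = sum_{d<N} H_I(d) if h_I = 0. *)
Definition is_degree (K : fieldType) (s : nat) (I : {mpoly K[s]} -> Prop)
    (e : rat) : Prop :=
  exists H : nat -> nat, (forall d, hilb_fun_is I d (H d)) /\
  exists (h : {poly rat}) (N : nat),
    (forall d, (N <= d)%N -> (H d)%:R = h.[d%:R]) /\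
    (if h != 0 then e = lead_coef h * ((size h).-1)`!%:R
     else e = (\sum_(d < N) H d)%:R).

Definition invariant_factors (m s : nat) (A : 'M[int]_(m, s)) (ds : seq int) : Prop :=
  (size ds <= minn m s)%N /\ all (fun x => 0 < x) ds /\ sorted dvdz ds /\
  exists2 L : 'M[int]_m, L \in unitmx &
  exists2 R : 'M[int]_s, R \in unitmx &
    A = L *m (\matrix_(i, j) (ds`_i *+ (i == j :> nat))) *m R.

From HB Require Import structures.
From mathcomp Require Import all_boot all_order all_algebra.
From mathcomp.multinomials Require Import mpoly.
From mathcomp Require Import zify.
Set Implicit Arguments. Unset Strict Implicit. Unset Printing Implicit Defensive.
Import Order.TTheory GRing.Theory Num.Theory.
Local Open Scope ring_scope.

(* Monomials t^u, t^v of the same degree are congruent modulo I(L) exactly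
   when u - v lies in L.  So if g, defined on exponents, is constant on
   L-cosets and separates the cosets met in degree d, one monomial from each
   class of g gives a basis of S_d/I_d, and H(d) is the size of the image of
   g in degree d.  In the coordinates x = a R^-1, where A = L D R is the
   Smith form, L is cut out by d_j | x_j for j < s - 1, while homogeneity
   makes the last coordinate a fixed multiple of the degree; so g can be the
   vector of residues x_j mod d_j.  Once d >= s * prod d_j every residue
   vector is attained in degree d, hence H(d) = prod d_j is the (constant)
   Hilbert polynomial and the degree. *)

Definition mnm_row s (u : 'X_{1..s}) : 'rV[int]_s := \row_i (u i)%:Z.

Lemma sum_mnm_row s (u : 'X_{1..s}) : \sum_i mnm_row u ord0 i = (mdeg u)%:Z.
Proof.
rewrite mdegE (big_morph Posz PoszD (erefl 0%:Z)).
by apply: eq_bigr => i _; rewrite mxE.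
Qed.

Lemma mnm_row_surj s (a : 'rV[int]_s) : (forall i, 0 <= a ord0 i) ->
  exists u : 'X_{1..s}, mnm_row u = a.
Proof.
move=> a_ge0; exists [multinom absz (a ord0 i) | i < s].
by apply/rowP => i; rewrite !mxE mnmE gez0_abs.
Qed.

Lemma sum_mnm_rowB s (u v : 'X_{1..s}) :
  \sum_i (mnm_row u - mnm_row v) ord0 i = (mdeg u)%:Z - (mdeg v)%:Z.
Proof.
by rewrite -!sum_mnm_row -sumrB; apply: eq_bigr => i _; rewrite !mxE.
Qed.

Lemma absz_max0_subN (x : int) :
  (absz (Num.max x 0))%:Z - (absz (Num.max (- x) 0))%:Z = x.
Proof. lia. Qed.

Lemma mnm_row_posmBnegm s (a : 'rV[int]_s) :
  mnm_row (posm a) - mnm_row (negm a) = a.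
Proof. by apply/rowP => i; rewrite /negm !mxE !mnmE !mxE absz_max0_subN. Qed.

Section LatticeIdeal.

Variables (K : fieldType) (s m : nat) (A : 'M[int]_(m, s)).
Local Notation I := (in_lattice_ideal K A).

Lemma lattice_ideal0 : I 0.
Proof. by exists [::]; split => //; rewrite big_nil. Qed.

Lemma lattice_idealD p q : I p -> I q -> I (p + q).
Proof.
move=> [r [hr ->]] [r' [hr' ->]]; exists (r ++ r'); split; last by rewrite big_cat.
by move=> x; rewrite mem_cat => /orP[/hr|/hr'].
Qed.

Lemma lattice_idealMl q p : I p -> I (q * p).
Proof.
move=> [r [hr ->]]; exists [seq (q * x.1, x.2) | x <- r]; split.
  by move=> x /mapP[y /hr hy ->].
by rewrite big_map mulr_sumr; apply: eq_bigr => x _; rewrite mulrA.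
Qed.

Lemma lattice_idealZ c p : I p -> I (c *: p).
Proof. by rewrite -mul_mpolyC; apply: lattice_idealMl. Qed.

Lemma lattice_ideal_sum (J : Type) (r : seq J) (P : pred J) (F : J -> {mpoly K[s]}) :
  (forall j, P j -> I (F j)) -> I (\sum_(j <- r | P j) F j).
Proof.
by move=> h; apply: (big_ind I) => //; [exact: lattice_ideal0 | exact: lattice_idealD].
Qed.

(* With [c] the componentwise minimum of [u] and [v], [u = c + a^+] and
   [v = c + a^-] for [a = u - v]. *)
Lemma lattice_ideal_binom (u v : 'X_{1..s}) :
  in_lattice A (mnm_row u - mnm_row v) -> I ('X_[u] - 'X_[v]).
Proof.
set a := mnm_row u - mnm_row v => hL.
set c := [multinom minn (u i) (v i) | i < s].
have hu : u = (c + posm a)%MM by apply/mnmP => i; rewrite mnmDE !mnmE !mxE; lia.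
have hv : v = (c + negm a)%MM by apply/mnmP => i; rewrite mnmDE !mnmE !mxE; lia.
exists [:: ('X_[c], a)]; split; first by move=> x; rewrite inE => /eqP->.
by rewrite big_seq1 /lbinom mulrBr -!mpolyXD -hu -hv.
Qed.

End LatticeIdeal.

Lemma card_ord_lt N b : (b <= N)%N -> #|[pred x : 'I_N | (x < b)%N]| = b.
Proof.
move=> bN; have widen_inj : injective (widen_ord bN) by move=> x y [] /val_inj.
rewrite -[RHS]card_ord -(card_image widen_inj).
apply: eq_card => x; rewrite inE; apply/idP/imageP => [xb|[y _ ->]]; last exact: (ltn_ord y).
by exists (Ordinal xb) => //; apply: val_inj.
Qed.

Definition monoms_deg s d : seq 'X_{1..s} :=
  [seq val x | x <- enum [pred x : 'X_{1..s < d.+1} | mdeg (val x) == d]].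

Lemma monoms_deg_uniq s d : uniq (monoms_deg s d).
Proof. by rewrite map_inj_uniq ?enum_uniq //; apply: val_inj. Qed.

Lemma mem_monoms_deg s d u : (u \in monoms_deg s d) = (mdeg u == d).
Proof.
apply/mapP/eqP => [[x]|hu]; first by rewrite mem_enum inE => /eqP hx ->.
have hb : (mdeg u < d.+1)%N by rewrite hu.
by exists (BMultinom hb) => //; rewrite mem_enum inE /= hu.
Qed.

Lemma homog_degX (K : fieldType) s d (u : 'X_{1..s}) :
  homog_deg d ('X_[u] : {mpoly K[s]}) = (mdeg u == d).
Proof. by rewrite /homog_deg msuppX /= andbT. Qed.

Lemma indep_mod_prefix (K : fieldType) (s : nat) (I : {mpoly K[s]} -> Prop) d a b
    (ps : b.-tuple {mpoly K[s]}) :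
  (a <= b)%N -> indep_mod I d ps -> exists qs : a.-tuple {mpoly K[s]}, indep_mod I d qs.
Proof.
move=> ab [ps_deg ps_ind].
exists [tuple tnth ps (widen_ord ab i) | i < a]; split=> [i|c hI i].
  by rewrite tnth_mktuple.
pose c' (j : 'I_b) : K := if insub (val j) is Some i' then c i' else 0.
suff /ps_ind/(_ (widen_ord ab i)) : I (\sum_(j < b) c' j *: tnth ps j) by rewrite /c' /= valK.
pose F k := (if insub k is Some i' then c i' else 0) *: nth 0 ps k.
have -> : \sum_(j < b) c' j *: tnth ps j = \sum_(j < b) F j.
  by apply: eq_bigr => j _; rewrite /F (tnth_nth 0).
have -> : \sum_(j < b) F j = \sum_(i < a) F i.
  rewrite (big_ord_widen b F ab) [RHS]big_mkcond; apply: eq_bigr => j _.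
  by case: ltnP => // aj; rewrite /F insubN ?scale0r // -leqNgt.
congr I: hI; apply: eq_bigr => j _.
by rewrite /F tnth_mktuple (tnth_nth 0) /= valK.
Qed.

Lemma hilb_fun_unique (K : fieldType) (s : nat) (I : {mpoly K[s]} -> Prop) d a b :
  hilb_fun_is I d a -> hilb_fun_is I d b -> a = b.
Proof.
move=> [[pa ha] na] [[pb hb] nb]; case: (ltngtP a b) => // [ab|ba].
  by case: na; apply: indep_mod_prefix hb.
by case: nb; apply: indep_mod_prefix ha.
Qed.

Lemma poly_eq_eventually (R : numDomainType) (p q : {poly R}) N :
  (forall d, (N <= d)%N -> p.[d%:R] = q.[d%:R]) -> p = q.
Proof.
move=> pq; apply/eqP; rewrite -subr_eq0; apply/negPn/negP => nz.
pose rs := [seq ((N + i)%:R : R) | i <- iota 0 (size (p - q))].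
have rs_roots : all (root (p - q)) rs.
  by apply/allP => x /mapP [i _ ->]; rewrite /root hornerD hornerN pq ?leq_addr ?subrr.
have rs_uniq : uniq rs.
  by rewrite map_inj_uniq ?iota_uniq // => i j /eqP; rewrite eqr_nat eqn_add2l => /eqP.
by have := max_poly_roots nz rs_roots rs_uniq; rewrite size_map size_iota ltnn.
Qed.

Lemma is_degree_eventually_const (K : fieldType) (s : nat) (I : {mpoly K[s]} -> Prop)
    (H : nat -> nat) (N c : nat) :
  (forall d, hilb_fun_is I d (H d)) -> (forall d, (N <= d)%N -> H d = c) -> (0 < c)%N ->
  is_degree I c%:R /\ (forall e, is_degree I e -> e = c%:R).
Proof.
move=> hH Hc c_gt0.
have c_neq0 : c%:R != 0 :> rat by rewrite pnatr_eq0 -lt0n.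
have degC : lead_coef (c%:R%:P : {poly rat}) * ((size (c%:R%:P : {poly rat})).-1)`!%:R = c%:R.
  by rewrite lead_coefC size_polyC c_neq0 mulr1.
split=> [|e [H' [hH' [h [N' [hh e_def]]]]]].
  exists H; split=> //; exists c%:R%:P, N; split=> [d dN|].
    by rewrite hornerC Hc.
  by rewrite polyC_eq0 c_neq0 degC.
suff h_def : h = c%:R%:P by move: e_def; rewrite h_def polyC_eq0 c_neq0 degC.
apply: (poly_eq_eventually (N := maxn N N')) => d; rewrite geq_max => /andP[dN dN'].
by rewrite -hh // (hilb_fun_unique (hH' d) (hH d)) Hc // hornerC.
Qed.

Section HilbertFunctionOfInvariant.

Variables (K : fieldType) (s m : nat) (A : 'M[int]_(m, s)) (d : nat).
Hypothesis homL : forall a, in_lattice A a -> \sum_(i < s) a ord0 i = 0.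
Variables (G : finType) (g : 'X_{1..s} -> G).
Hypothesis g_lattice :
  forall u v, in_lattice A (mnm_row u - mnm_row v) -> g u = g v.
Hypothesis g_complete : forall u v, mdeg u = d -> mdeg v = d -> g u = g v ->
  in_lattice A (mnm_row u - mnm_row v).
Local Notation I := (in_lattice_ideal K A).

Definition classes : {set G} := [set t | has (fun u => g u == t) (monoms_deg s d)].

Definition class_rep t :=
  nth 0%MM (monoms_deg s d) (find (fun u => g u == t) (monoms_deg s d)).

Lemma class_repP t : t \in classes -> mdeg (class_rep t) = d /\ g (class_rep t) = t.
Proof.
rewrite inE => h; split; last exact/eqP/(nth_find 0%MM h).
by apply/eqP; rewrite -mem_monoms_deg /class_rep mem_nth // -has_find.
Qed.

Lemma mem_classes u : mdeg u = d -> g u \in classes.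
Proof.
by move=> hu; rewrite inE; apply/hasP; exists u; rewrite ?mem_monoms_deg ?hu.
Qed.

Definition class_coef t (p : {mpoly K[s]}) : K :=
  \sum_(u <- monoms_deg s d | g u == t) p@_u.

Fact class_coef_is_scalar t : scalar (class_coef t).
Proof.
move=> c p q; rewrite /class_coef mulr_sumr -big_split.
by apply: eq_bigr => u _; rewrite mcoeffD mcoeffZ.
Qed.

HB.instance Definition _ t :=
  GRing.isLinear.Build K {mpoly K[s]} K *%R (class_coef t) (class_coef_is_scalar t).

Lemma class_coefX t u : class_coef t 'X_[u] = ((mdeg u == d) && (g u == t))%:R.
Proof.
rewrite /class_coef; have [/andP[/eqP hu /eqP <-]|h] := boolP (_ && _).
  rewrite big_mkcond (bigD1_seq u) ?monoms_deg_uniq ?mem_monoms_deg ?hu //=.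
  rewrite eqxx mcoeffX eqxx big1 ?addr0 // => w hw.
  by rewrite mcoeffX [u == w]eq_sym (negbTE hw) if_same.
apply: big1_seq => w /andP[/eqP hw]; rewrite mem_monoms_deg mcoeffX.
have [euw /eqP hw'|//] := eqVneq u w.
by move: h; rewrite euw hw hw' !eqxx.
Qed.

(* The two monomials of t^w (t^a+ - t^a-) have the same degree and class. *)
Lemma class_coef_lbinom t q a : in_lattice A a -> class_coef t (q * lbinom K a) = 0.
Proof.
move=> ha; rewrite [q]mpolyE mulr_suml linear_sum big1 // => w _.
rewrite -scalerAl linearZ /lbinom mulrBr -!mpolyXD linearB /= !(class_coefX t).
have hw : mnm_row (w + posm a)%MM - mnm_row (w + negm a)%MM = a.
  rewrite -[RHS]mnm_row_posmBnegm; apply/rowP => i; rewrite !mxE !mnmDE !PoszD.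
  by rewrite opprD addrACA subrr add0r.
have hwL : in_lattice A (mnm_row (w + posm a)%MM - mnm_row (w + negm a)%MM) by rewrite hw.
have := homL ha; rewrite -{1}hw sum_mnm_rowB => /eqP; rewrite subr_eq0 eqz_nat => /eqP ->.
by rewrite (g_lattice hwL) subrr mulr0.
Qed.

Lemma class_coef_ideal t p : I p -> class_coef t p = 0.
Proof.
case=> r [hr ->]; rewrite linear_sum big1_seq // => x /andP[_ /hr].
exact: class_coef_lbinom.
Qed.

Local Notation n := #|classes|.
Local Notation rep_of j := (class_rep (enum_val j)).

Lemma rep_ofP (j : 'I_n) : mdeg (rep_of j) = d /\ g (rep_of j) = enum_val j.
Proof. exact/class_repP/enum_valP. Qed.

Lemma class_coef_rep_of (i j : 'I_n) :
  class_coef (enum_val i) 'X_[rep_of j] = (i == j)%:R.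
Proof.
by rewrite class_coefX (rep_ofP j).1 (rep_ofP j).2 eqxx (inj_eq enum_val_inj) eq_sym.
Qed.

Definition normal_form (p : {mpoly K[s]}) :=
  \sum_(j < n) class_coef (enum_val j) p *: 'X_[rep_of j].

Fact normal_form_is_linear : linear normal_form.
Proof.
move=> c p q; rewrite /normal_form scaler_sumr -big_split.
by apply: eq_bigr => j _; rewrite linearP scalerDl scalerA.
Qed.

HB.instance Definition _ :=
  GRing.isLinear.Build K {mpoly K[s]} {mpoly K[s]} *:%R normal_form normal_form_is_linear.

Lemma normal_formX u : mdeg u = d -> normal_form 'X_[u] = 'X_[class_rep (g u)].
Proof.
move=> hu; have gu := mem_classes hu; rewrite /normal_form.
rewrite (bigD1 (enum_rank_in gu (g u))) //= big1 => [|j hj].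
  by rewrite enum_rankK_in // class_coefX hu !eqxx scale1r addr0.
rewrite class_coefX hu eqxx /= -(enum_rankK_in gu gu).
by rewrite (inj_eq enum_val_inj) eq_sym (negbTE hj) scale0r.
Qed.

Lemma homog_normal_form p : homog_deg d p -> I (p - normal_form p).
Proof.
move=> /allP hp; rewrite {1 2}[p]mpolyE (linear_sum normal_form) -sumrB big_seq.
apply: lattice_ideal_sum => u /hp /eqP hu; rewrite linearZ /= -scalerBr normal_formX //.
apply/lattice_idealZ/lattice_ideal_binom.
by have [h1 h2] := class_repP (mem_classes hu); apply: g_complete.
Qed.

Lemma indep_class_reps : indep_mod I d [tuple 'X_[rep_of j] | j < n].
Proof.
split=> [j|c hI i]; first by rewrite tnth_mktuple homog_degX (rep_ofP j).1.
have := class_coef_ideal (enum_val i) hI; rewrite linear_sum (bigD1 i) //= big1.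
  by rewrite tnth_mktuple linearZ /= class_coef_rep_of eqxx mulr1 addr0.
by move=> j hj; rewrite tnth_mktuple linearZ /= class_coef_rep_of eq_sym (negbTE hj) mulr0.
Qed.

(* n+1 vectors of class coefficients in K^n are dependent, and a dependent
   combination has normal form 0, hence lies in I. *)
Lemma not_indep_classes_succ :
  ~ exists ps : n.+1.-tuple {mpoly K[s]}, indep_mod I d ps.
Proof.
case=> ps [hh hind].
pose M : 'M[K]_(n.+1, n) := \matrix_(k, j) class_coef (enum_val j) (tnth ps k).
have /rowV0Pn[v /sub_kermxP vM0 /negP[]] : kermx M != 0.
  by rewrite kermx_eq0 /row_free; apply: contraTneq (rank_leq_col M) => ->; rewrite ltnn.
apply/eqP/rowP => k; rewrite mxE; apply: hind; set q := \sum_(k < n.+1) _.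
have nf_q : normal_form q = 0.
  apply: big1 => j _; suff -> : class_coef (enum_val j) q = 0 by rewrite scale0r.
  have /rowP/(_ j) := vM0; rewrite !mxE => <-; rewrite linear_sum.
  by apply: eq_bigr => l _; rewrite linearZ /= mxE.
rewrite -[q]subr0 -nf_q (linear_sum normal_form) -sumrB.
apply: lattice_ideal_sum => l _; rewrite linearZ /= -scalerBr.
exact/lattice_idealZ/homog_normal_form.
Qed.

Lemma hilb_fun_classes : hilb_fun_is I d #|classes|.
Proof.
by split; [exists [tuple 'X_[rep_of j] | j < n]; exact: indep_class_reps
          | exact: not_indep_classes_succ].
Qed.

End HilbertFunctionOfInvariant.

Lemma map_mx_unitmx (R S : comUnitRingType) (f : {rmorphism R -> S}) n (M : 'M[R]_n) :
  M \in unitmx -> map_mx f M \in unitmx.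
Proof.
move=> hM; have h : map_mx f (invmx M) *m map_mx f M = 1%:M.
  by rewrite -map_mxM mulVmx // map_mx1.
by case: (mulmx1_unit h).
Qed.

Section SmithCoordinates.

Variables (m s : nat) (A : 'M[int]_(m, s)) (ds : seq int).
Variables (L : 'M[int]_m) (R : 'M[int]_s).
Hypothesis ds_size : (size ds <= minn m s)%N.
Hypothesis ds_pos : all (fun x => 0 < x) ds.
Hypothesis L_unit : L \in unitmx.
Hypothesis R_unit : R \in unitmx.
Local Notation D := (\matrix_(i < m, j < s) (ds`_i *+ (i == j :> nat))).
Hypothesis A_snf : A = L *m D *m R.

Lemma nth_ds_gt0 i : (i < size ds)%N -> 0 < ds`_i.
Proof. by move=> hi; move/allP: ds_pos; apply; rewrite mem_nth. Qed.

Lemma rank_snf : \rank (map_mx (intr : int -> rat) A) = size ds.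
Proof.
have [ds_m ds_s] : (size ds <= m)%N /\ (size ds <= s)%N.
  by move: ds_size; rewrite leq_min => /andP.
rewrite A_snf !map_mxM -mulmxA.
rewrite (eqmxMfull _ (_ : row_full _)); last by rewrite row_full_unit map_mx_unitmx.
rewrite mxrankMfree; last by rewrite row_free_unit map_mx_unitmx.
pose dl : 'rV[rat]_s := \row_j (if (j < size ds)%N then (ds`_j)%:~R else 1).
have -> : map_mx (intr : int -> rat) D
          = (pid_mx (size ds) : 'M_(m, s)) *m diag_mx dl.
  apply/matrixP => i j; rewrite mul_mx_diag !mxE.
  case: eqP => [eij|_]; last by rewrite mulr0n rmorph0 mul0r.
  rewrite mulr1n /= eij; case: ltnP => hj; first by rewrite mul1r.
  by rewrite nth_default // rmorph0 mul0r.
rewrite mxrankMfree ?rank_pid_mx //.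
rewrite row_free_unit unitmxE det_diag unitfE; apply/prodf_neq0 => j _.
rewrite mxE; case: ltnP => hj; last by rewrite oner_eq0.
by rewrite intr_eq0 gt_eqF // nth_ds_gt0.
Qed.

Definition smith_coord (a : 'rV[int]_s) := a *m invmx R.

Lemma in_latticeP a :
  in_lattice A a <-> forall j : 'I_s, (ds`_j %| smith_coord a ord0 j)%Z.
Proof.
split=> [[u ->] j|h].
  rewrite /smith_coord A_snf !mulmxA mulmxK // !mxE; apply: rpred_sum => i _; rewrite !mxE.
  by case: eqP => [->|_]; rewrite ?mulr0n ?mulr0 ?dvdz0 // mulr1n dvdz_mull.
set w := smith_coord a.
pose z : 'rV[int]_m :=
  \row_i (if insub (val i) is Some j then (w ord0 j %/ ds`_j)%Z else 0).
exists (z *m invmx L); rewrite A_snf !mulmxA mulmxKV //.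
suff e : w = z *m D by rewrite -e /w /smith_coord mulmxKV.
apply/rowP => j; rewrite [RHS]mxE.
have [jm|mj] := ltnP j m.
  rewrite (bigD1 (Ordinal jm)) //= big1 => [|i hi]; last first.
    rewrite [X in _ * X]mxE; case: eqP => [e|_]; last by rewrite mulr0n mulr0.
    by move: hi; rewrite (_ : i = Ordinal jm) ?eqxx //; apply: val_inj.
  by rewrite [z _ _]mxE [D _ _]mxE eqxx mulr1n addr0 /= valK divzK.
rewrite big1 => [|i _]; last first.
  rewrite [X in _ * X]mxE; case: eqP => [e|_]; last by rewrite mulr0n mulr0.
  by have := ltn_ord i; rewrite e ltnNge mj.
have ds_j : ds`_j = 0.
  by rewrite nth_default // (leq_trans ds_size) // (leq_trans (geq_minl _ _)).
by have := divzK (h j); rewrite ds_j mulr0.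
Qed.

End SmithCoordinates.

Section HomogeneousCorankOne.

Variables (n m : nat) (A : 'M[int]_(m, n.+1)) (ds : seq int).
Variables (L : 'M[int]_m) (R : 'M[int]_n.+1).
Hypothesis ds_size : (size ds <= minn m n.+1)%N.
Hypothesis ds_pos : all (fun x => 0 < x) ds.
Hypothesis L_unit : L \in unitmx.
Hypothesis R_unit : R \in unitmx.
Hypothesis A_snf : A = L *m (\matrix_(i, j) (ds`_i *+ (i == j :> nat))) *m R.
Hypothesis homL : forall a, in_lattice A a -> \sum_i a ord0 i = 0.
Hypothesis size_ds : size ds = n.

Implicit Types (a b : 'rV[int]_n.+1).

Let latticeP := in_latticeP ds_size L_unit R_unit A_snf.
Let ds_gt0 := nth_ds_gt0 ds_pos.
Local Notation coord := (smith_coord R).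

Lemma sum_row_smith_eq0 (j : 'I_n.+1) : (j < n)%N -> \sum_i R j i = 0.
Proof.
move=> jn; have ds_j_gt0 : 0 < ds`_j by rewrite ds_gt0 ?size_ds.
have /homL : in_lattice A (ds`_j *: row j R).
  apply/latticeP => k; rewrite /smith_coord rowE -scalemxAl mulmxK // !mxE.
  by rewrite (ord1 ord0) eqxx /=; case: eqP => [->|_]; rewrite ?mulr1 ?mulr0 ?dvdz0.
under eq_bigr do rewrite !mxE.
by rewrite -mulr_sumr => /eqP; rewrite mulf_eq0 gt_eqF //= => /eqP.
Qed.

Definition last_row_sum := \sum_i R ord_max i.

Lemma sum_row_smith_coord a :
  \sum_i a ord0 i = coord a ord0 ord_max * last_row_sum.
Proof.
rewrite -{1}[a](mulmxKV R_unit).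
under eq_bigr do rewrite mxE.
rewrite exchange_big big_ord_recr /= big1 ?add0r -?mulr_sumr // => j _.
by rewrite -mulr_sumr sum_row_smith_eq0 ?mulr0 // /=; exact: (ltn_ord j).
Qed.

Lemma last_row_sum_unit : coord (delta_mx 0 ord0) ord0 ord_max * last_row_sum = 1.
Proof.
rewrite -sum_row_smith_coord (bigD1 ord0) //= big1 ?addr0 => [|i hi];
  by rewrite mxE ?eqxx // (negbTE hi) andbF.
Qed.

Lemma last_row_sum_neq0 : last_row_sum != 0.
Proof. by apply: contra_eq_neq last_row_sum_unit => ->; rewrite mulr0. Qed.

Lemma smith_coord_last_eq0 a : \sum_i a ord0 i = 0 -> coord a ord0 ord_max = 0.
Proof.
rewrite sum_row_smith_coord => /eqP.
by rewrite mulf_eq0 (negbTE last_row_sum_neq0) orbF => /eqP.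
Qed.

Lemma ord_max_ge (j : 'I_n.+1) : (n <= j)%N -> j = ord_max.
Proof. by move=> nj; apply/val_inj/eqP; rewrite /= eqn_leq -ltnS ltn_ord nj. Qed.

Local Notation P := (\prod_(x <- ds) x).
Local Notation Pn := (absz P).

Lemma prod_ds_gt0 : 0 < P.
Proof. by rewrite big_seq; apply: prodr_gt0 => x; move/allP: ds_pos; apply. Qed.

Lemma prod_ds_absz : P = Pn%:Z.
Proof. by rewrite gez0_abs // ltW // prod_ds_gt0. Qed.

Lemma absz_prod_ds_gt0 : (0 < Pn)%N.
Proof. by rewrite absz_gt0 gt_eqF ?prod_ds_gt0. Qed.

Lemma dvdz_nth_prod_ds (j : nat) : (j < n)%N -> (ds`_j %| P)%Z.
Proof.
by rewrite -size_ds => jn; rewrite (big_nth 0) big_mkord (bigD1 (Ordinal jn)) //= dvdz_mulr.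
Qed.

Lemma in_lattice_prod_ds (z : 'rV[int]_n.+1) : \sum_i z ord0 i = 0 -> in_lattice A (P *: z).
Proof.
move=> z0; apply/latticeP => j; rewrite /smith_coord -scalemxAl mxE.
have [jn|nj] := ltnP j n; first by rewrite dvdz_mulr // dvdz_nth_prod_ds.
by rewrite (ord_max_ge nj) smith_coord_last_eq0 ?mulr0 ?dvdz0.
Qed.

Definition residue_bound (j : 'I_n.+1) : nat := if (j < n)%N then absz ds`_j else 1.

Definition residue_nat a (j : 'I_n.+1) : nat :=
  if (j < n)%N then absz (coord a ord0 j %% ds`_j)%Z else 0.

Lemma residue_nat_lt a j : (residue_nat a j < residue_bound j)%N.
Proof.
rewrite /residue_nat /residue_bound; case: ifP => // jn.
have dj : 0 < ds`_j by rewrite ds_gt0 ?size_ds.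
by rewrite -ltz_nat !gez0_abs ?modz_ge0 ?ltz_pmod ?gt_eqF // ltW.
Qed.

Lemma residue_bound_le j : (residue_bound j <= Pn)%N.
Proof.
rewrite /residue_bound; case: ifP => jn; last exact: absz_prod_ds_gt0.
by rewrite dvdn_leq ?absz_prod_ds_gt0 // -dvdzE dvdz_nth_prod_ds.
Qed.

Lemma residue_nat_eq a b (j : 'I_n.+1) : (j < n)%N ->
  (residue_nat a j == residue_nat b j) = (ds`_j %| coord a ord0 j - coord b ord0 j)%Z.
Proof.
move=> jn; have dj : 0 < ds`_j by rewrite ds_gt0 ?size_ds.
have mod_ge0 x : 0 <= (x %% ds`_j)%Z by rewrite modz_ge0 ?gt_eqF.
by rewrite /residue_nat jn -eqz_mod_dvd -eqz_nat !gez0_abs.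
Qed.

(* The codomain 'I_Pn.+1 only serves to make the residue vectors range over a
   finite type; every residue is smaller than P. *)
Definition residue a : {ffun 'I_n.+1 -> 'I_Pn.+1} :=
  [ffun j => inord (residue_nat a j)].

Lemma residue_val a j : (residue a j : nat) = residue_nat a j.
Proof.
by rewrite ffunE inordK // ltnS (leq_trans (ltnW (residue_nat_lt a j))) ?residue_bound_le.
Qed.

Lemma residueP a b :
  reflect (forall j, residue_nat a j = residue_nat b j) (residue a == residue b).
Proof.
apply: (iffP eqP) => [ab j|ab].
  by rewrite -!residue_val ab.
by apply/ffunP => j; apply: val_inj; rewrite /= !residue_val.
Qed.

Lemma smith_coordB a b j : coord (a - b) ord0 j = coord a ord0 j - coord b ord0 j.
Proof. by rewrite /smith_coord mulmxBl !mxE. Qed.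

Lemma residue_lattice a b : in_lattice A (a - b) -> residue a = residue b.
Proof.
move/latticeP => ab; apply/eqP/residueP => j.
have [jn|nj] := ltnP j n; last by rewrite /residue_nat ltnNge nj.
by apply/eqP; rewrite residue_nat_eq // -smith_coordB.
Qed.

Lemma residue_complete a b : \sum_i a ord0 i = \sum_i b ord0 i ->
  residue a = residue b -> in_lattice A (a - b).
Proof.
move=> sab /eqP/residueP rab; apply/latticeP => j.
have [jn|nj] := ltnP j n; first by rewrite smith_coordB -residue_nat_eq ?rab.
rewrite (ord_max_ge nj) smith_coord_last_eq0 ?dvdz0 //.
by under eq_bigr do rewrite !mxE; rewrite sumrB sab subrr.
Qed.

Definition residue_box : {set {ffun 'I_n.+1 -> 'I_Pn.+1}} :=
  [set t : {ffun 'I_n.+1 -> 'I_Pn.+1} | [forall j, t j < residue_bound j]%N].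

Lemma residue_in_box a : residue a \in residue_box.
Proof. by rewrite inE; apply/forallP => j; rewrite residue_val residue_nat_lt. Qed.

Lemma card_residue_box : #|residue_box| = Pn.
Proof.
have -> : #|residue_box| =
    #|(family (fun j => [pred x : 'I_Pn.+1 | x < residue_bound j]%N) : pred _)|.
  by apply: eq_card => t; rewrite inE; apply/forallP/familyP => h j; have := h j.
rewrite card_family foldrE big_map big_enum /=.
under eq_bigr do rewrite card_ord_lt ?(leq_trans (residue_bound_le _)) //.
rewrite big_ord_recr /= /residue_bound ltnn muln1.
rewrite (big_morph absz abszM (erefl : absz 1 = 1%N)) (big_nth 0) size_ds big_mkord.
by apply: eq_bigr => j _; rewrite /= ltn_ord.
Qed.

Lemma residue_of_degree (d0 : nat) t : t \in residue_box ->
  exists2 a : 'rV[int]_n.+1, \sum_i a ord0 i = d0%:Z & residue a = t.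
Proof.
rewrite inE => /forallP t_lt.
pose c := coord (delta_mx 0 ord0) ord0 ord_max.
pose w : 'rV[int]_n.+1 := \row_j (if (j < n)%N then (t j : nat)%:Z else d0%:Z * c).
have coord_w : coord (w *m R) = w by rewrite /smith_coord mulmxK.
exists (w *m R).
  by rewrite sum_row_smith_coord coord_w mxE ltnn -mulrA last_row_sum_unit mulr1.
apply/ffunP => j; apply: val_inj; rewrite /= residue_val /residue_nat coord_w mxE.
have := t_lt j; rewrite /residue_bound; case: ifP => jn tj; last by case: (t j) tj => [[]].
have dj : 0 < ds`_j by rewrite ds_gt0 ?size_ds.
by rewrite modz_small // lez_nat leq0n -[ds`_j]gez0_abs ?ltW // ltz_nat.
Qed.

(* Reduce every coordinate but the first modulo [P] along the lattice
   vectors [P (e_0 - e_i)]; the first one absorbs the remaining degree. *)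
Lemma nonneg_lattice_shift (d0 : nat) b : (n.+1 * Pn <= d0)%N ->
  \sum_i b ord0 i = d0%:Z ->
  exists a, [/\ forall i, 0 <= a ord0 i, \sum_i a ord0 i = d0%:Z & in_lattice A (a - b)].
Proof.
move=> d0_large b_deg; have P_gt0 := prod_ds_gt0.
pose z : 'rV[int]_n.+1 := \row_i
  (if i == ord0 then \sum_(k < n.+1 | k != ord0) (b ord0 k %/ P)%Z else - (b ord0 i %/ P)%Z).
have z_deg : \sum_i z ord0 i = 0.
  rewrite (bigD1 ord0) //= mxE eqxx -big_split big1 // => i i0.
  by rewrite mxE (negbTE i0) /= subrr.
set a := b + P *: z.
have a_deg : \sum_i a ord0 i = d0%:Z.
  rewrite (eq_bigr (fun i => b ord0 i + P * z ord0 i)) => [|i _]; last by rewrite !mxE.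
  by rewrite big_split /= -mulr_sumr z_deg mulr0 addr0.
have a_mod i : i != ord0 -> a ord0 i = (b ord0 i %% P)%Z.
  move=> i0; rewrite !mxE (negbTE i0) {1}(divz_eq (b ord0 i) P).
  by rewrite mulrN mulrC addrAC subrr add0r.
exists a; split => //; last by rewrite addrC addKr; apply: in_lattice_prod_ds.
move=> i; have [-> | i0] := eqVneq i ord0; last by rewrite a_mod // modz_ge0 ?gt_eqF.
have -> : a ord0 ord0 = d0%:Z - \sum_(i < n.+1 | i != ord0) a ord0 i.
  by rewrite -a_deg (bigD1 ord0) //= addrK.
rewrite subr_ge0 (le_trans (_ : _ <= \sum_(i < n.+1 | i != ord0) P)) //.
  by apply: ler_sum => k k0; rewrite a_mod // ltW // ltz_pmod.
rewrite (le_trans (_ : _ <= \sum_(i < n.+1) P)) //.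
  by rewrite [leRHS](bigD1 ord0) //= lerDr ltW.
by rewrite sumr_const card_ord prod_ds_absz -mulr_natr natz -PoszM lez_nat mulnC.
Qed.

Local Notation residue_mnm := (fun u => residue (mnm_row u)).

Lemma classes_residue_box (d0 : nat) : (n.+1 * Pn <= d0)%N ->
  classes d0 residue_mnm = residue_box.
Proof.
move=> d0_large; apply/setP => t; rewrite inE.
apply/hasP/idP => [[u _ /eqP <-]|t_box]; first exact: residue_in_box.
have [b b_deg <-] := residue_of_degree d0 t_box.
have [a [a_ge0 a_deg ab]] := nonneg_lattice_shift d0_large b_deg.
have [u ua] := mnm_row_surj a_ge0.
exists u; first by rewrite mem_monoms_deg -eqz_nat -sum_mnm_row ua a_deg.
by rewrite /= ua (residue_lattice ab).
Qed.

Lemma hilb_fun_residue_classes (K : fieldType) (d0 : nat) :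
  hilb_fun_is (in_lattice_ideal K A) d0 #|classes d0 residue_mnm|.
Proof.
apply: hilb_fun_classes => // [u v|u v u_deg v_deg].
  exact: residue_lattice.
by apply: residue_complete; rewrite !sum_mnm_row u_deg v_deg.
Qed.

Lemma card_residue_classes (d0 : nat) : (n.+1 * Pn <= d0)%N ->
  #|classes d0 residue_mnm| = Pn.
Proof. by move=> /classes_residue_box ->; exact: card_residue_box. Qed.

Lemma lattice_ideal_degree (K : fieldType) :
  is_degree (in_lattice_ideal K A) Pn%:R /\
  (forall e, is_degree (in_lattice_ideal K A) e -> e = Pn%:R).
Proof.
exact: (is_degree_eventually_const (hilb_fun_residue_classes K) card_residue_classes
  absz_prod_ds_gt0).
Qed.

End HomogeneousCorankOne.

Theorem corollary3p14 (K : fieldType) (s m : nat) (A : 'M[int]_(m, s)) :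
  (2 <= s)%N ->
  (forall a, in_lattice A a -> \sum_(i < s) a ord0 i = 0) ->
  \rank (map_mx (intr : int -> rat) A) = s.-1 ->
  forall ds : seq int, invariant_factors A ds ->
    is_degree (in_lattice_ideal K A) (\prod_(d <- ds) d)%:~R /\
    (forall e, is_degree (in_lattice_ideal K A) e -> e = (\prod_(d <- ds) d)%:~R).
Proof.
case: s A => [|n] A // _ homL rankA ds [ds_size [ds_pos [_ [L L_unit [R R_unit A_snf]]]]].
have size_ds : size ds = n by rewrite -(rank_snf ds_size ds_pos L_unit R_unit A_snf).
rewrite (prod_ds_absz ds_pos).
exact: (lattice_ideal_degree ds_size ds_pos L_unit R_unit A_snf homL size_ds).
Qed.
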